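(* Let $(Q,d)$ be a compact metric space, $p_0:Q\to[0,+\infty]$ a function which is not identically $+\infty$, $f$ a nonnegative Radon measure on $Q$, and take the transportation cost $c(x,y)=d(x,y)$. Consider the problem of maximizing $$F(p)=\int_Q\Big(\max_{y\in T_p(x)}p(y)\Big)\,df(x)$$ over $\mathcal A=\{p:Q\to\overline{\mathbb{R}}\ :\ p\le p_0 \text{ on } Q,\ p\text{ lower semicontinuous}\}$. Then an optimal solution is given by $$p_{opt}(x)=\max\big\{p(x)\ :\ p\in\mathrm{Lip}_{1,d}(Q),\ p\le p_0\big\}.$$
   Context: For $p\in\mathcal A$ and $x\in Q$: $v_p(x)=\min_{y\in Q}\{d(x,y)+p(y)\}$ and $T_p(x)=\{y\in Q\ :\ d(x,y)+p(y)=v_p(x)\}$. $\mathrm{Lip}_{1,d}(Q)$ denotes the class of functions on $Q$ that are Lipschitz with respect to $d$ with Lipschitz constant at most $1$. *)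

From HB Require Import structures.
From mathcomp Require Import all_boot all_order all_algebra.
From mathcomp Require Import all_classical all_reals all_analysis.
Set Implicit Arguments. Unset Strict Implicit. Unset Printing Implicit Defensive.
Import Order.TTheory GRing.Theory Num.Theory.
Import numFieldNormedType.Exports.
Local Open Scope classical_set_scope.
Local Open Scope ring_scope.

(* A metric space carrying a distinguished point (needed to build the Borel
   sigma-algebra via g_sigma_algebraType; harmless since Q is nonempty in the
   theorem, p0 not being identically +oo). *)
#[short(type="pmetricType")]
HB.structure Definition PointedMetric (K : numDomainType) :=
  { M of Pointed M & Metric K M }.

Definition borel_of (R : realType) (Q : pmetricType R) :=
  g_sigma_algebraType (@open Q).

Section defs.
Context {R : realType} {Q : pmetricType R}.
Local Open Scope ereal_scope.

Definition dQ : Q -> Q -> R := @mdist R Q.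

Definition vfun (p : Q -> \bar R) (x : Q) : \bar R :=
  ereal_inf [set (dQ x y)%:E + p y | y in [set: Q]].

Definition Tset (p : Q -> \bar R) (x : Q) : set Q :=
  [set y | (dQ x y)%:E + p y = vfun p x].

Definition Fintegrand (p : Q -> \bar R) (x : Q) : \bar R :=
  ereal_sup [set p y | y in Tset p x].

Definition Lip1 (q : Q -> R) : Prop :=
  forall x y, (`|q x - q y| <= dQ x y)%R.

Definition admissible (p0 p : Q -> \bar R) : Prop :=
  lower_semicontinuous p /\ (forall x, p x <= p0 x).

Definition p_opt (p0 : Q -> \bar R) (x : Q) : \bar R :=
  ereal_sup [set (q x)%:E | q in [set q | Lip1 q /\ forall y, (q y)%:E <= p0 y]].

End defs.

Definition Fobj (R : realType) (Q : pmetricType R)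
  (f : {measure set (borel_of Q) -> \bar R}) (p : Q -> \bar R) : \bar R :=
  (\int[f]_(x in [set: borel_of Q]) Fintegrand p x)%E.

From HB Require Import structures.
From mathcomp Require Import all_boot all_order all_algebra.
From mathcomp Require Import all_classical all_reals all_analysis.
From mathcomp Require Import lra.
Set Implicit Arguments. Unset Strict Implicit. Unset Printing Implicit Defensive.
Import Order.TTheory GRing.Theory Num.Theory.
Local Open Scope classical_set_scope.
Local Open Scope ring_scope.
Local Open Scope ereal_scope.

(* The value function v_{p0} is the inf-convolution of p0 with d; since p0 is
   nonnegative and finite somewhere it is real valued, and the triangle
   inequality makes it the largest 1-Lipschitz minorant of p0, i.e. p_opt.
   For any p <= p0 and y in T_p(x) we have p(y) <= d(x,y) + p(y) = v_p(x)
   <= v_{p0}(x), so the integrand of F(p) is bounded by p_opt; for a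
   1-Lipschitz q we have v_q = q and x in T_q(x), so the integrand of
   F(p_opt) is p_opt itself.  Monotonicity of the integral concludes; it holds
   without any measurability because the integral of a nonnegative function is
   a supremum over simple minorants. *)

Lemma le_integralT_ge0 d (T : measurableType d) (R : realType)
    (mu : {measure set T -> \bar R}) (h g : T -> \bar R) :
  (forall x, 0 <= g x) -> (forall x, h x <= g x) ->
  \int[mu]_(x in [set: T]) h x <= \int[mu]_(x in [set: T]) g x.
Proof.
move=> g_ge0 hg; rewrite integralE.
have -> : \int[mu]_(x in [set: T]) g x = \int[mu]_(x in [set: T]) g^\+ x.
  by apply: eq_integral => x _; rewrite funeposE; apply/esym/max_idPl.
apply: (@le_trans _ _ (\int[mu]_(x in [set: T]) h^\+ x)).
  rewrite -[leRHS]sube0; apply: leeB => //.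
  by apply: integral_ge0 => x _; exact: funeneg_ge0.
rewrite !ge0_integralTE //; try by move=> x; exact: funepos_ge0.
apply: ereal_sup_le => _ [s sh <-]; exists s => // x.
apply: (le_trans (sh x)).
by apply: (@funepos_le _ _ setT); rewrite ?in_setT // z _; exact: hg.
Qed.

Section value_function.
Context {R : realType} {Q : pmetricType R}.
Implicit Types (p q : Q -> \bar R) (x y : Q).

Lemma dQ_ge0 x y : (0 <= dQ x y)%R.
Proof. exact: mdist_ge0. Qed.

Lemma vfun_le p x y : vfun p x <= (dQ x y)%:E + p y.
Proof. by apply: ereal_inf_lbound; exists y. Qed.

Lemma vfun_ge0 p : (forall y, 0 <= p y) -> forall x, 0 <= vfun p x.
Proof.
move=> p_ge0 x; apply: le_ereal_inf_tmp => _ [y _ <-].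
by apply: adde_ge0; rewrite ?lee_fin ?dQ_ge0.
Qed.

Lemma le_vfun p q : (forall y, p y <= q y) -> forall x, vfun p x <= vfun q x.
Proof.
move=> pq x; apply: le_ereal_inf_tmp => _ [y _ <-].
exact: (le_trans (vfun_le p x y) (leeD2l _ (pq y))).
Qed.

Lemma vfun_triangle p x y : vfun p x <= (dQ x y)%:E + vfun p y.
Proof.
rewrite -leeBlDl //; apply: le_ereal_inf_tmp => _ [z _ <-].
rewrite leeBlDl // addeA -EFinD.
apply: (le_trans (vfun_le p x z)); apply: leeD2r.
by rewrite lee_fin; exact: metric_triangle.
Qed.

Lemma vfun_lip1 (q : Q -> R) x : Lip1 q -> vfun (EFin \o q) x = (q x)%:E.
Proof.
move=> Lq; apply/le_anti/andP; split.
  by apply: (le_trans (vfun_le _ x x)); rewrite /dQ mdistxx add0e.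
apply: le_ereal_inf_tmp => _ [y _ <-] /=; rewrite -EFinD lee_fin.
by have := Lq x y; rewrite ler_norml => /andP[_]; lra.
Qed.

Lemma Fintegrand_le_vfun p x : Fintegrand p x <= vfun p x.
Proof.
apply: ge_ereal_sup => _ [y Tpxy <-]; rewrite -Tpxy.
by apply: lee_paddl => //; rewrite lee_fin dQ_ge0.
Qed.

Lemma Fintegrand_lip1 (q : Q -> R) x :
  Lip1 q -> Fintegrand (EFin \o q) x = (q x)%:E.
Proof.
move=> Lq; apply/le_anti/andP; split.
  by rewrite -(vfun_lip1 x Lq) Fintegrand_le_vfun.
apply: ereal_sup_ubound; exists x => //.
by rewrite /Tset /= vfun_lip1 // /dQ mdistxx add0e.
Qed.

Lemma lip1_lower_semicontinuous (q : Q -> R) :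
  Lip1 q -> lower_semicontinuous (EFin \o q).
Proof.
move=> Lq x a; rewrite lte_fin => ax.
exists (ball x (q x - a)%R); first by apply: nbhsx_ballx; rewrite subr_gt0.
move=> y; rewrite ballEmdist /= lte_fin => xy.
by have := Lq x y; rewrite /dQ ler_norml => /andP[_]; lra.
Qed.

End value_function.

Section lipschitz_envelope.
Context {R : realType} {Q : pmetricType R}.
Variables (p0 : Q -> \bar R) (y0 : Q).
Hypotheses (p0_ge0 : forall x, 0 <= p0 x) (p0y0_fin : p0 y0 != +oo).

Lemma vfun_fin_num x : vfun p0 x \is a fin_num.
Proof.
rewrite ge0_fin_numE ?vfun_ge0 //; apply: (le_lt_trans (vfun_le p0 x y0)).
have p0y0 : p0 y0 \is a fin_num by rewrite ge0_fin_numE // ltey.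
by rewrite -(fineK p0y0) -EFinD ltry.
Qed.

Definition lip_envelope (x : Q) : R := fine (vfun p0 x).

Lemma lip_envelopeE x : (lip_envelope x)%:E = vfun p0 x.
Proof. exact/fineK/vfun_fin_num. Qed.

Lemma lip_envelope_ge0 x : (0 <= lip_envelope x)%R.
Proof. exact/fine_ge0/vfun_ge0. Qed.

Lemma lip_envelope_lip1 : Lip1 lip_envelope.
Proof.
have tri x y : (lip_envelope x <= dQ x y + lip_envelope y)%R.
  by rewrite -lee_fin EFinD !lip_envelopeE vfun_triangle.
move=> x y; have := tri x y; have := tri y x.
have -> : dQ y x = dQ x y by exact: metric_sym.
by rewrite ler_norml => ? ?; apply/andP; split; lra.
Qed.

Lemma lip_envelope_le x : (lip_envelope x)%:E <= p0 x.
Proof.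
rewrite lip_envelopeE; apply: (le_trans (vfun_le p0 x x)).
by rewrite /dQ mdistxx add0e.
Qed.

Lemma p_optE : p_opt p0 = EFin \o lip_envelope.
Proof.
apply: funext => x; apply/le_anti/andP; split.
  apply: ge_ereal_sup => _ [q [Lq qp0] <-].
  by rewrite /= lip_envelopeE -(vfun_lip1 x Lq); exact: le_vfun.
apply: ereal_sup_ubound; exists lip_envelope => //.
by split; [exact: lip_envelope_lip1|exact: lip_envelope_le].
Qed.

Lemma Fintegrand_le_lip_envelope p :
  (forall x, p x <= p0 x) -> forall x, Fintegrand p x <= (lip_envelope x)%:E.
Proof.
move=> pp0 x; rewrite lip_envelopeE.
exact: (le_trans (Fintegrand_le_vfun p x) (le_vfun pp0 x)).
Qed.

End lipschitz_envelope.

Theorem theorem3p1 (R : realType) (Q : pmetricType R)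
  (p0 : Q -> \bar R)
  (f : {measure set (borel_of Q) -> \bar R}) :
  compact [set: Q] ->
  (forall x, 0 <= p0 x) ->
  (exists x, p0 x != +oo) ->
  f [set: borel_of Q] < +oo ->
  (forall x, exists q : Q -> R,
     [/\ Lip1 q, (forall y, (q y)%:E <= p0 y) & (q x)%:E = p_opt p0 x]) /\
  admissible p0 (p_opt p0) /\
  (forall p, admissible p0 p -> Fobj f p <= Fobj f (p_opt p0)).
Proof.
move=> _ p0_ge0 [y0 p0y0_fin] _.
have Lq := lip_envelope_lip1 p0_ge0 p0y0_fin.
have qp0 := lip_envelope_le p0_ge0 p0y0_fin.
rewrite (p_optE p0_ge0 p0y0_fin); split; [|split].
- by move=> x; exists (lip_envelope p0).
- by split; [exact: lip1_lower_semicontinuous|].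
- move=> p [_ pp0]; rewrite /Fobj.
  under [X in _ <= X]eq_integral do rewrite Fintegrand_lip1 //.
  apply: le_integralT_ge0 => [x|x].
    by rewrite lee_fin (lip_envelope_ge0 p0_ge0).
  by exact (Fintegrand_le_lip_envelope p0_ge0 p0y0_fin pp0 x).
Qed.
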